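(* Let $f(z)=\sum_{k\ge0}\hat f(k)z^k$ be holomorphic on the unit disk with $\sum_{k\ge0}|\hat f(k)|<\infty$ and $f(0)\ne0$, and let $(\gamma_n)_{n\ge0}$ be an increasing sequence in $(0,\infty)$. Let $A=(a_{nk})_{n,k\ge0}$ be the lower-triangular matrix with $a_{nk}:=\gamma_n^{-1}\widehat{(1/f)}(n-k)$ for $0\le k\le n$ and $a_{nk}=0$ for $k>n$, where $\widehat{(1/f)}(m)$ denotes the $m$-th Taylor coefficient of $1/f$ at $0$. Then $A$ has a left inverse $B=(b_{jn})_{j,n\ge0}$ (i.e. $\sum_n|b_{jn}|<\infty$ for each $j$ and $\sum_n b_{jn}a_{nk}=\delta_{jk}$ for all $j,k$) which is lower-triangular and satisfies \[ \sum_{n\ge0}|b_{jn}|\asymp\gamma_j\quad(j\to\infty). \]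
   Context: $\asymp$ means each side is bounded by a constant multiple of the other, with constants independent of $j$. *)

From Stdlib Require Import Reals.
From Coquelicot Require Import Coquelicot.
Open Scope R_scope.

(* [inv_taylor fhat c]: c is the sequence of Taylor coefficients at 0 of 1/f,
   where f(z) = sum_k fhat k z^k with fhat 0 <> 0.  These are exactly the
   coefficients of the Cauchy-product inverse: (fhat * c)(m) = delta_{m0}. *)
Definition inv_taylor (fhat c : nat -> C) : Prop :=
  forall m : nat,
    sum_n (fun i => Cmult (fhat i) (c (m - i)%nat)) m
    = (if Nat.eqb m 0 then RtoC 1 else RtoC 0).

Definition matA (gamma : nat -> R) (c : nat -> C) (n k : nat) : C :=
  if Nat.leb k n then Cmult (RtoC (/ gamma n)) (c (n - k)%nat) else RtoC 0.

From Stdlib Require Import Reals Lia Lra.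
From Coquelicot Require Import Coquelicot.
Open Scope R_scope.

(* Writing [T(g)] for the lower-triangular Toeplitz matrix of the Taylor
   coefficients of [g], we have [A = D^-1 T(1/f)] with [D = diag(gamma)], so
   [B = T(f) D] is a lower-triangular left inverse because [T(f) T(1/f) = I].
   The j-th row of [B] has l^1 norm [sum_(n <= j) |fhat (j - n)| gamma n]; its
   diagonal term gives the lower bound [|fhat 0| gamma j], and monotonicity of
   [gamma] gives the upper bound [(sum_k |fhat k|) gamma j]. *)

Lemma sum_n_zero_tail {G : AbelianMonoid} (a : nat -> G) (j m : nat) :
  (forall n, (j < n <= m)%nat -> a n = zero) -> (j <= m)%nat ->
  sum_n a m = sum_n a j.
Proof.
  intros Hzero Hjm.
  destruct (Nat.eq_dec j m) as [<-|Hne]; [reflexivity|].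
  unfold sum_n. rewrite (sum_n_m_Chasles a 0 j m) by lia.
  rewrite (sum_n_m_ext_loc a (fun _ => zero) (S j) m)
    by (intros n Hn; apply Hzero; lia).
  rewrite sum_n_m_const_zero. apply plus_zero_r.
Qed.

Lemma is_series_zero_tail {K : AbsRing} {V : NormedModule K} (a : nat -> V) (j : nat) :
  (forall n, (j < n)%nat -> a n = zero) -> is_series a (sum_n a j).
Proof.
  intros Hzero. unfold is_series.
  apply filterlim_ext_loc with (fun _ => sum_n a j); [|apply filterlim_const].
  exists j. intros m Hm. symmetry.
  apply sum_n_zero_tail; [intros n Hn; apply Hzero; lia | exact Hm].
Qed.

Lemma sum_n_reflect {G : AbelianMonoid} (F : nat -> G) (j : nat) :
  sum_n (fun n => F (j - n)%nat) j = sum_n F j.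
Proof.
  induction j as [|j IH].
  - rewrite !sum_O. reflexivity.
  - rewrite (sum_Sn F j). unfold sum_n in *. rewrite sum_Sn_m by lia.
    rewrite <- (sum_n_m_S (fun n => F (S j - n)%nat) 0 j), Nat.sub_0_r.
    rewrite (sum_n_m_ext (fun n => F (S j - S n)%nat) (fun n => F (j - n)%nat))
      by reflexivity.
    rewrite IH. apply plus_comm.
Qed.

Lemma sum_n_le_nonneg (a : nat -> R) (m n : nat) :
  (forall k, 0 <= a k) -> (m <= n)%nat -> sum_n a m <= sum_n a n.
Proof.
  intros Hpos Hmn. induction Hmn as [|n _ IH]; [lra|].
  rewrite sum_Sn. change (plus ?x ?y) with (x + y).
  specialize (Hpos (S n)). lra.
Qed.

Lemma sum_n_le_Series (a : nat -> R) (N : nat) :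
  (forall n, 0 <= a n) -> ex_series a -> sum_n a N <= Series a.
Proof.
  intros Hpos Hex. pose proof (Series_correct a Hex) as Hs.
  apply is_series_Reals in Hs. rewrite sum_n_Reals.
  apply sum_incr; assumption.
Qed.

(* Entry [(j, k)] of the product of two lower-triangular Toeplitz matrices. *)
Lemma sum_n_triangular_convolution {K : Ring} (u v : nat -> K) (j k : nat) :
  (k <= j)%nat ->
  sum_n (fun n => if Nat.leb k n then mult (u (j - n)%nat) (v (n - k)%nat) else zero) j
  = sum_n (fun i => mult (u i) (v (j - k - i)%nat)) (j - k).
Proof.
  intros Hkj. rewrite <- sum_n_reflect.
  rewrite (sum_n_zero_tail _ (j - k) j); [| |lia].
  - apply sum_n_ext_loc. intros i Hi.
    replace (Nat.leb k (j - i)) with true by (symmetry; apply Nat.leb_le; lia).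
    do 2 f_equal; lia.
  - intros i Hi.
    replace (Nat.leb k (j - i)) with false by (symmetry; apply Nat.leb_gt; lia).
    reflexivity.
Qed.

Lemma sum_n_triangular_convolution_lt {K : Ring} (u v : nat -> K) (j k : nat) :
  (j < k)%nat ->
  sum_n (fun n => if Nat.leb k n then mult (u (j - n)%nat) (v (n - k)%nat) else zero) j
  = zero.
Proof.
  intros Hjk. rewrite (sum_n_ext_loc _ (fun _ => zero)).
  - unfold sum_n. apply sum_n_m_const_zero.
  - intros n Hn.
    replace (Nat.leb k n) with false by (symmetry; apply Nat.leb_gt; lia).
    reflexivity.
Qed.

Section LeftInverse.

Variables (fhat : nat -> C) (gamma : nat -> R).
Hypothesis gamma_pos : forall n, 0 < gamma n.

Definition matB (j n : nat) : C :=
  if Nat.leb n j then Cmult (fhat (j - n)%nat) (RtoC (gamma n)) else RtoC 0.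

Lemma matB_upper_zero (j n : nat) : (j < n)%nat -> matB j n = RtoC 0.
Proof.
  intros Hjn. unfold matB.
  replace (Nat.leb n j) with false by (symmetry; apply Nat.leb_gt; exact Hjn).
  reflexivity.
Qed.

Lemma matB_mul_matA (c : nat -> C) (j n k : nat) : (n <= j)%nat ->
  Cmult (matB j n) (matA gamma c n k)
  = if Nat.leb k n then Cmult (fhat (j - n)%nat) (c (n - k)%nat) else RtoC 0.
Proof.
  intros Hnj. unfold matB, matA.
  replace (Nat.leb n j) with true by (symmetry; apply Nat.leb_le; exact Hnj).
  destruct (Nat.leb k n); [|apply Cmult_0_r].
  assert (Hcancel : Cmult (RtoC (gamma n)) (RtoC (/ gamma n)) = RtoC 1).
  { rewrite <- RtoC_mult, Rinv_r; [reflexivity|].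
    apply Rgt_not_eq, gamma_pos. }
  transitivity (Cmult (Cmult (fhat (j - n)%nat) (Cmult (RtoC (gamma n)) (RtoC (/ gamma n))))
                      (c (n - k)%nat)).
  - ring.
  - rewrite Hcancel, Cmult_1_r. reflexivity.
Qed.

Lemma matB_left_inverse (c : nat -> C) (j k : nat) :
  inv_taylor fhat c ->
  is_series (fun n => Cmult (matB j n) (matA gamma c n k))
            (if Nat.eqb j k then RtoC 1 else RtoC 0).
Proof.
  intros Hc.
  assert (Hseries := is_series_zero_tail (K := C_AbsRing) (V := C_NormedModule)
    (fun n => Cmult (matB j n) (matA gamma c n k)) j).
  rewrite (sum_n_ext_loc _ (fun n => if Nat.leb k n
             then mult (fhat (j - n)%nat) (c (n - k)%nat) else zero)) in Hseries
    by (intros n Hn; apply matB_mul_matA; lia).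
  destruct (Nat.le_gt_cases k j) as [Hkj|Hjk].
  - rewrite sum_n_triangular_convolution, Hc in Hseries by exact Hkj.
    replace (Nat.eqb j k) with (Nat.eqb (j - k) 0).
    + apply Hseries. intros n Hn. rewrite matB_upper_zero by exact Hn. apply Cmult_0_l.
    + destruct (Nat.eqb_spec (j - k) 0); destruct (Nat.eqb_spec j k); lia.
  - rewrite sum_n_triangular_convolution_lt in Hseries by exact Hjk.
    replace (Nat.eqb j k) with false by (symmetry; apply Nat.eqb_neq; lia).
    apply Hseries. intros n Hn. rewrite matB_upper_zero by exact Hn. apply Cmult_0_l.
Qed.

Lemma is_series_Cmod_matB (j : nat) :
  is_series (fun n => Cmod (matB j n))
            (sum_n (fun i => Cmod (fhat i) * gamma (j - i)%nat) j).
Proof.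
  assert (Hseries := is_series_zero_tail (K := R_AbsRing) (V := R_NormedModule)
    (fun n => Cmod (matB j n)) j).
  rewrite <- sum_n_reflect.
  rewrite (sum_n_ext_loc _ (fun n => Cmod (matB j n))).
  - apply Hseries. intros n Hn. rewrite matB_upper_zero by exact Hn. apply Cmod_0.
  - intros n Hn. symmetry. unfold matB.
    replace (Nat.leb n j) with true by (symmetry; apply Nat.leb_le; lia).
    replace (j - (j - n))%nat with n by lia.
    rewrite Cmod_mult, Cmod_R, Rabs_pos_eq by apply Rlt_le, gamma_pos.
    reflexivity.
Qed.

Lemma Series_Cmod_matB_ge (j : nat) :
  Cmod (fhat 0%nat) * gamma j <= Series (fun n => Cmod (matB j n)).
Proof.
  rewrite (is_series_unique _ _ (is_series_Cmod_matB j)).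
  assert (Hfirst := sum_n_le_nonneg (fun i => Cmod (fhat i) * gamma (j - i)%nat) 0 j).
  rewrite sum_O, Nat.sub_0_r in Hfirst.
  apply Hfirst; [|lia].
  intros i. apply Rmult_le_pos; [apply Cmod_ge_0 | apply Rlt_le, gamma_pos].
Qed.

Hypothesis gamma_incr : forall n m, (n <= m)%nat -> gamma n <= gamma m.

Lemma Series_Cmod_matB_le (j : nat) :
  ex_series (fun k => Cmod (fhat k)) ->
  Series (fun n => Cmod (matB j n)) <= Series (fun k => Cmod (fhat k)) * gamma j.
Proof.
  intros Hsum. rewrite (is_series_unique _ _ (is_series_Cmod_matB j)).
  apply Rle_trans with (sum_n (fun i => Cmod (fhat i) * gamma j) j).
  - apply sum_n_m_le. intros i.
    apply Rmult_le_compat_l; [apply Cmod_ge_0 | apply gamma_incr; lia].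
  - rewrite (sum_n_mult_r (K := R_Ring)). change (mult ?x ?y) with (x * y).
    apply Rmult_le_compat_r; [apply Rlt_le, gamma_pos|].
    apply sum_n_le_Series; [intros; apply Cmod_ge_0 | exact Hsum].
Qed.

End LeftInverse.

Theorem theorem3p3
  (fhat : nat -> C) (gamma : nat -> R) (c : nat -> C)
  (Hsum : ex_series (fun k => Cmod (fhat k)))
  (Hf0 : fhat 0%nat <> RtoC 0)
  (Hgpos : forall n, 0 < gamma n)
  (Hgincr : forall n m, (n <= m)%nat -> gamma n <= gamma m)
  (Hc : inv_taylor fhat c) :
  exists B : nat -> nat -> C,
    (forall j n, (j < n)%nat -> B j n = RtoC 0) /\
    (forall j, ex_series (fun n => Cmod (B j n))) /\
    (forall j k, is_series (fun n => Cmult (B j n) (matA gamma c n k))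
                           (if Nat.eqb j k then RtoC 1 else RtoC 0)) /\
    (exists c1 c2 : R, 0 < c1 /\ 0 < c2 /\ exists N : nat,
       forall j, (N <= j)%nat ->
         c1 * gamma j <= Series (fun n => Cmod (B j n)) <= c2 * gamma j).
Proof.
  exists (matB fhat gamma).
  split; [exact (matB_upper_zero fhat gamma)|].
  split; [intros j; eexists; exact (is_series_Cmod_matB fhat gamma Hgpos j)|].
  split; [intros j k; exact (matB_left_inverse fhat gamma Hgpos c j k Hc)|].
  assert (Hc1 : 0 < Cmod (fhat 0%nat)) by (apply Cmod_gt_0; exact Hf0).
  assert (Hc2 : Cmod (fhat 0%nat) <= Series (fun k => Cmod (fhat k))).
  { rewrite <- (sum_O (fun k => Cmod (fhat k))).
    apply sum_n_le_Series; [intros; apply Cmod_ge_0 | exact Hsum]. }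
  exists (Cmod (fhat 0%nat)), (Series (fun k => Cmod (fhat k))).
  split; [exact Hc1|]. split; [lra|].
  exists 0%nat. intros j _. split.
  - exact (Series_Cmod_matB_ge fhat gamma Hgpos j).
  - exact (Series_Cmod_matB_le fhat gamma Hgpos Hgincr j Hsum).
Qed.
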